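(* Let $V^{\bullet\bullet}$ be an $N=2$ supersymmetric complex. Then every row of $V^{\bullet\bullet}$ except possibly the $0$th row (i.e. each complex $(V^{\bullet,j},D_1)$ with $j\neq0$) is exact with respect to $D_1$, and every column except possibly the $0$th column (each $(V^{i,\bullet},D_2)$ with $i\ne0$) is exact with respect to $D_2$.
   Context: Let $G=\underline{\mathrm{Aut}}(\mathbb A^{0|2})$ be the group super-scheme of automorphisms of $\mathrm{Spec}\,\Lambda[\eta_1,\eta_2]$ ($\eta_i$ odd); its $R$-points are substitutions $\eta_i\mapsto a^i+b^i_1\eta_1+b^i_2\eta_2+c^i\eta_1\eta_2$ with $(b^i_j)$ invertible; it is isomorphic to $SL_{1|2}$, with Lie superalgebra $\mathrm{Der}\,\Lambda[\eta_1,\eta_2]$. An $N=2$ supersymmetric complex is a super vector space $V$ with an action of $G$. The action of the torus $\mathbb G_m\times\mathbb G_m$ (diagonal substitutions $\eta_i\mapsto b_i\eta_i$) gives a bigrading $V=\bigoplus V^{ij}$ on which $\Theta_1=\eta_1\partial/\partial\eta_1$ acts by $i$ and $\Theta_2=\eta_2\partial/\partial\eta_2$ by $j$; the odd derivations $D_1=\partial/\partial\eta_1$, $D_2=\partial/\partial\eta_2$ act as anticommuting square-zero differentials of bidegrees $(1,0)$ and $(0,1)$, making $V^{\bullet\bullet}$ a double complex; row $j$ means $V^{\bullet,j}$ and column $i$ means $V^{i,\bullet}$. *)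

From HB Require Import structures.
From mathcomp Require Import all_boot all_order all_algebra.
Set Implicit Arguments. Unset Strict Implicit. Unset Printing Implicit Defensive.
Import Order.TTheory GRing.Theory Num.Theory.
Local Open Scope ring_scope.

(* The Grassmann algebra  Lambda[eta1, eta2]  over a field k, as k^4 with    *)
(* basis  e0 = 1, e1 = eta1, e2 = eta2, e3 = eta1 eta2  (column vectors).    *)
(* Linear endomorphisms of it are 4x4 matrices acting on the left.           *)
Section Grassmann.
Variable k : fieldType.

Definition gc (a : 'cV[k]_4) (n : nat) : k := a (inord n) 0.

(* product in Lambda[eta1,eta2]: eta1^2 = eta2^2 = 0, eta2 eta1 = - eta1 eta2 *)
Definition gmul (a b : 'cV[k]_4) : 'cV[k]_4 :=
  \col_(i < 4) nth 0
    [:: gc a 0 * gc b 0;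
        gc a 0 * gc b 1 + gc a 1 * gc b 0;
        gc a 0 * gc b 2 + gc a 2 * gc b 0;
        gc a 0 * gc b 3 + gc a 3 * gc b 0 + gc a 1 * gc b 2 - gc a 2 * gc b 1]
    i.

Definition gpar (i : 'I_4) : bool := (i == 1 :> nat) || (i == 2 :> nat).

Definition ghomog (p : bool) (a : 'cV[k]_4) : Prop :=
  forall i : 'I_4, gpar i != p -> a i 0 = 0.

Definition is_sder (p : bool) (X : 'M[k]_4) : Prop :=
  (forall r a, ghomog r a -> ghomog (addb r p) (X *m a)) /\
  (forall r a b, ghomog r a ->
     X *m gmul a b = gmul (X *m a) b + (-1) ^+ (p && r) *: gmul a (X *m b)).

Definition sbr (p q : bool) (X Y : 'M[k]_4) : 'M[k]_4 :=
  X *m Y - (-1) ^+ (p && q) *: (Y *m X).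

(* D1 = d/d eta1 : e1 |-> e0, e3 |-> e2 *)
Definition dD1 : 'M[k]_4 :=
  \matrix_(i < 4, j < 4)
    (if ((i == 0 :> nat) && (j == 1 :> nat)) || ((i == 2 :> nat) && (j == 3 :> nat))
     then 1 else 0).
(* D2 = d/d eta2 : e2 |-> e0, e3 |-> - e1 *)
Definition dD2 : 'M[k]_4 :=
  \matrix_(i < 4, j < 4)
    (if (i == 0 :> nat) && (j == 2 :> nat) then 1
     else if (i == 1 :> nat) && (j == 3 :> nat) then -1 else 0).
(* Theta1 = eta1 d/d eta1 = diag(0,1,0,1) *)
Definition dTheta1 : 'M[k]_4 :=
  \matrix_(i < 4, j < 4) (if (i == j) && ((i == 1 :> nat) || (i == 3 :> nat)) then 1 else 0).
(* Theta2 = eta2 d/d eta2 = diag(0,0,1,1) *)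
Definition dTheta2 : 'M[k]_4 :=
  \matrix_(i < 4, j < 4) (if (i == j) && ((i == 2 :> nat) || (i == 3 :> nat)) then 1 else 0).

End Grassmann.

Section Complex.
Variables (k : fieldType) (V : lmodType k).

Definition is_subspace (S : V -> Prop) : Prop :=
  S 0 /\ forall (a : k) u v, S u -> S v -> S (a *: u + v).

Definition is_superspace (Vev Vod : V -> Prop) : Prop :=
  [/\ is_subspace Vev, is_subspace Vod,
      (forall v, exists v0 v1, [/\ Vev v0, Vod v1 & v = v0 + v1]) &
      (forall v, Vev v -> Vod v -> v = 0)].

Definition Vpar (Vev Vod : V -> Prop) (r : bool) : V -> Prop :=
  if r then Vod else Vev.

Definition Vbi (rho : 'M[k]_4 -> V -> V) (i j : int) (v : V) : Prop :=
  rho (dTheta1 k) v = i%:~R *: v /\ rho (dTheta2 k) v = j%:~R *: v.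

(* An action of Der Lambda[eta1,eta2] on the super vector space V, coming   *)
(* from an action of G = Aut(A^{0|2}): rho is linear, rho X  *)
(* is a linear operator of parity |X|, super brackets are respected (with   *)
(* the order reversal of a right action, so that D1, D2 have bidegrees      *)
(* (1,0), (0,1) as in the paper), and the torus G_m x G_m acts, i.e. V is   *)
(* the sum of the integral weight spaces V^{ij}.                            *)
Definition N2susy_complex (Vev Vod : V -> Prop) (rho : 'M[k]_4 -> V -> V) : Prop :=
  is_superspace Vev Vod /\
  [/\ (forall X (a : k) u v, rho X (a *: u + v) = a *: rho X u + rho X v),
      (forall X Y (a : k) v, rho (a *: X + Y) v = a *: rho X v + rho Y v),
      (forall p X r v, is_sder p X -> Vpar Vev Vod r v ->
                       Vpar Vev Vod (addb r p) (rho X v)),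
      (forall p q X Y v, is_sder p X -> is_sder q Y ->
         rho (sbr p q X Y) v = rho Y (rho X v) - (-1) ^+ (p && q) *: rho X (rho Y v))
    & (forall v, exists s : seq (int * int * V),
         (forall t, t \in s -> Vbi rho t.1.1 t.1.2 t.2) /\ v = \sum_(t <- s) t.2)].

End Complex.

From HB Require Import structures.
From mathcomp Require Import all_boot all_order all_algebra ring.
Import Order.TTheory GRing.Theory Num.Theory.
Local Open Scope ring_scope.

(* The odd derivation h = eta1 Theta2 is a contracting homotopy for D1 in
   rows j <> 0: [D1, h] = Theta2 acts on V^{ij} by the invertible scalar j,
   so a D1-cocycle v of weight (i,j) equals D1 (h v / j); moreover
   [Theta1, h] = h and [Theta2, h] = 0 show that h v has weight (i-1, j).
   Columns are handled symmetrically with eta2 Theta1. *)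

Section GrassmannCoordinates.
Variable k : fieldType.

Lemma gcM (X : 'M[k]_4) a n : gc (X *m a) n =
  X (inord n) (inord 0) * gc a 0 + X (inord n) (inord 1) * gc a 1 +
  X (inord n) (inord 2) * gc a 2 + X (inord n) (inord 3) * gc a 3.
Proof.
rewrite /gc mxE !big_ord_recl big_ord0 addr0 !addrA.
have inordS p m : (m < p.+1)%N -> (inord m.+1 : 'I_p.+2) = lift ord0 (inord m).
  by move=> m_lt; apply/val_inj; rewrite /= !inordK.
have inord0 p : (inord 0 : 'I_p.+1) = ord0 by apply/val_inj; rewrite /= inordK.
by rewrite !inordS //; do !rewrite inord0.
Qed.

Lemma gcD (a b : 'cV[k]_4) n : gc (a + b) n = gc a n + gc b n.
Proof. by rewrite /gc mxE. Qed.

Lemma gcZ (c : k) (a : 'cV[k]_4) n : gc (c *: a) n = c * gc a n.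
Proof. by rewrite /gc mxE. Qed.

Lemma gc_gmul (a b : 'cV[k]_4) n : (n < 4)%N -> gc (gmul a b) n =
  nth 0 [:: gc a 0 * gc b 0;
            gc a 0 * gc b 1 + gc a 1 * gc b 0;
            gc a 0 * gc b 2 + gc a 2 * gc b 0;
            gc a 0 * gc b 3 + gc a 3 * gc b 0 + gc a 1 * gc b 2 - gc a 2 * gc b 1] n.
Proof. by move=> n_lt4; rewrite /gc /gmul mxE inordK. Qed.

Lemma gc_inj (a b : 'cV[k]_4) : gc a 0 = gc b 0 -> gc a 1 = gc b 1 ->
  gc a 2 = gc b 2 -> gc a 3 = gc b 3 -> a = b.
Proof.
move=> e0 e1 e2 e3; apply/matrixP => i j; rewrite !ord1 -[i]inord_val.
by case: i => [[|[|[|[|?]]]] ?].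
Qed.

Lemma ghomogP r (a : 'cV[k]_4) : ghomog r a <->
  (if r then gc a 0 = 0 /\ gc a 3 = 0 else gc a 1 = 0 /\ gc a 2 = 0).
Proof.
split=> [a_r | a_r i].
  by rewrite /gc; case: r a_r => a_r; split; apply: a_r; rewrite /gpar inordK.
rewrite -[i]inord_val; case: i => [[|[|[|[|?]]]] ?] //=;
  rewrite /gpar inordK //=; case: r a_r => -[a1 a2]; rewrite // ?eqxx //;
  by rewrite -/(gc a _).
Qed.

End GrassmannCoordinates.

Lemma inord4_eq n m : (n < 4)%N -> (m < 4)%N ->
  ((inord n : 'I_4) == inord m) = (n == m).
Proof. by move=> n_lt4 m_lt4; rewrite -val_eqE /= !inordK. Qed.

Section Derivations.
Variable k : fieldType.

(* eta1 Theta2 : e2 |-> e3 *)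
Definition dEta1Theta2 : 'M[k]_4 :=
  \matrix_(i < 4, j < 4) (if (i == 3 :> nat) && (j == 2 :> nat) then 1 else 0).
(* eta2 Theta1 : e1 |-> - e3 *)
Definition dEta2Theta1 : 'M[k]_4 :=
  \matrix_(i < 4, j < 4) (if (i == 3 :> nat) && (j == 1 :> nat) then -1 else 0).

Ltac sder_by_coordinates :=
  split;
  [ move=> [] a /ghomogP; let a_hom := fresh in
    move=> a_hom; apply/ghomogP; move: a_hom;
    rewrite !gcM !mxE ?inord4_eq ?inordK //= => -[-> ->]; split; ring
  | move=> [] a b /ghomogP; let a_hom := fresh in
    move=> a_hom; apply: gc_inj; move: a_hom;
    rewrite ?gcM ?gcD ?gcZ !gc_gmul //= ?gcM !mxE ?inord4_eq ?inordK //=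
      => -[-> ->];
    rewrite ?expr0 ?expr1 ?scale1r; ring ].

Lemma sder_D1 : is_sder true (dD1 k). Proof. sder_by_coordinates. Qed.
Lemma sder_D2 : is_sder true (dD2 k). Proof. sder_by_coordinates. Qed.
Lemma sder_Theta1 : is_sder false (dTheta1 k). Proof. sder_by_coordinates. Qed.
Lemma sder_Theta2 : is_sder false (dTheta2 k). Proof. sder_by_coordinates. Qed.
Lemma sder_Eta1Theta2 : is_sder true dEta1Theta2. Proof. sder_by_coordinates. Qed.
Lemma sder_Eta2Theta1 : is_sder true dEta2Theta1. Proof. sder_by_coordinates. Qed.

Ltac matrix_by_entries :=
  rewrite /sbr; apply/matrixP => -[[|[|[|[|?]]]] ?] // -[[|[|[|[|?]]]] ?] //;
  rewrite !mxE !big_ord_recl !big_ord0 !mxE /= ?mxE /=; ring.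

Lemma sbr_D1_Eta1Theta2 : sbr true true (dD1 k) dEta1Theta2 = dTheta2 k.
Proof. matrix_by_entries. Qed.
Lemma sbr_Theta1_Eta1Theta2 :
  sbr false true (dTheta1 k) dEta1Theta2 = 1 *: dEta1Theta2.
Proof. matrix_by_entries. Qed.
Lemma sbr_Theta2_Eta1Theta2 :
  sbr false true (dTheta2 k) dEta1Theta2 = 0 *: dEta1Theta2.
Proof. matrix_by_entries. Qed.

Lemma sbr_D2_Eta2Theta1 : sbr true true (dD2 k) dEta2Theta1 = dTheta1 k.
Proof. matrix_by_entries. Qed.
Lemma sbr_Theta2_Eta2Theta1 :
  sbr false true (dTheta2 k) dEta2Theta1 = 1 *: dEta2Theta1.
Proof. matrix_by_entries. Qed.
Lemma sbr_Theta1_Eta2Theta1 :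
  sbr false true (dTheta1 k) dEta2Theta1 = 0 *: dEta2Theta1.
Proof. matrix_by_entries. Qed.

End Derivations.

Lemma pchar0_intr_eq0 (k : fieldType) : [pchar k] =i pred0 ->
  forall j : int, ((j%:~R : k) == 0) = (j == 0).
Proof.
move/pcharf0P=> natr_eq0 [n | n]; first by rewrite /= natr_eq0.
by rewrite NegzE intrN oppr_eq0 natr_eq0.
Qed.

Section Homotopy.
Variables (k : fieldType) (V : lmodType k) (rho : 'M[k]_4 -> V -> V).
Hypothesis rho_linear :
  forall X (a : k) u v, rho X (a *: u + v) = a *: rho X u + rho X v.
Hypothesis rho_linear_op :
  forall X Y (a : k) v, rho (a *: X + Y) v = a *: rho X v + rho Y v.
Hypothesis rho_sbr : forall p q X Y v, is_sder p X -> is_sder q Y ->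
  rho (sbr p q X Y) v = rho Y (rho X v) - (-1) ^+ (p && q) *: rho X (rho Y v).

Lemma rho0 X : rho X 0 = 0.
Proof.
have := rho_linear X 1 0 0; rewrite !scale1r !addr0 => double.
by apply/(addrI (rho X 0)); rewrite addr0 -double.
Qed.

Lemma rhoZ X (a : k) v : rho X (a *: v) = a *: rho X v.
Proof. by rewrite -[a *: v]addr0 rho_linear rho0 addr0. Qed.

Lemma rho0_op v : rho 0 v = 0.
Proof.
have := rho_linear_op 0 0 1 v; rewrite !scale1r !addr0 => double.
by apply/(addrI (rho 0 v)); rewrite addr0 -double.
Qed.

Lemma rhoZ_op X (a : k) v : rho (a *: X) v = a *: rho X v.
Proof. by rewrite -[a *: X]addr0 rho_linear_op rho0_op addr0. Qed.

(* In the paper's convention a right action reverses brackets, hence the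
   eigenvalue of T drops by c rather than rises. *)
Lemma rho_eigen_shift {p T Y} {c l : k} {v} :
  is_sder false T -> is_sder p Y -> sbr false p T Y = c *: Y ->
  rho T v = l *: v -> rho T (rho Y v) = (l - c) *: rho Y v.
Proof.
move=> T_der Y_der TY Tv; have := rho_sbr _ _ _ _ v T_der Y_der.
rewrite TY rhoZ_op Tv rhoZ /= expr0 scale1r => /eqP.
by rewrite scalerBl eq_sym subr_eq addrC -subr_eq => /eqP ->.
Qed.

Lemma rho_homotopy D H v : is_sder true D -> is_sder true H ->
  rho D v = 0 -> rho (sbr true true D H) v = rho D (rho H v).
Proof.
move=> D_der H_der Dv; rewrite rho_sbr // Dv rho0 /= expr1 scaleN1r.
by rewrite sub0r opprK.
Qed.

Lemma exact_of_homotopy D H S T (i j : k) v :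
  is_sder true D -> is_sder true H -> is_sder false S -> is_sder false T ->
  sbr true true D H = T ->
  sbr false true S H = 1 *: H -> sbr false true T H = 0 *: H ->
  j != 0 -> rho S v = i *: v -> rho T v = j *: v -> rho D v = 0 ->
  exists w, [/\ rho S w = (i - 1) *: w, rho T w = j *: w & rho D w = v].
Proof.
move=> D_der H_der S_der T_der DH SH TH j_neq0 Sv Tv Dv.
exists (j^-1 *: rho H v); rewrite !rhoZ.
rewrite (rho_eigen_shift S_der H_der SH Sv).
rewrite (rho_eigen_shift T_der H_der TH Tv).
rewrite subr0 -rho_homotopy // DH Tv !scalerA mulVf // mulfV // !scale1r.
by rewrite mulrC.
Qed.

End Homotopy.

Theorem proposition2p3p7 (k : fieldType) (Hchar0 : [pchar k] =i pred0)
  (V : lmodType k) (Vev Vod : V -> Prop) (rho : 'M[k]_4 -> V -> V)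
  (HV : N2susy_complex Vev Vod rho) :
  (forall (i j : int) (v : V), j != 0 -> Vbi rho i j v -> rho (dD1 k) v = 0 ->
     exists w, Vbi rho (i - 1) j w /\ rho (dD1 k) w = v) /\
  (forall (i j : int) (v : V), i != 0 -> Vbi rho i j v -> rho (dD2 k) v = 0 ->
     exists w, Vbi rho i (j - 1) w /\ rho (dD2 k) w = v).
Proof.
case: HV => _ [rho_lin rho_lin_op _ rho_br _].
have exactness := @exact_of_homotopy k V rho rho_lin rho_lin_op rho_br.
have intr_neq0 (n : int) : n != 0 -> (n%:~R : k) != 0 by rewrite pchar0_intr_eq0.
split=> [i j v /intr_neq0 j_neq0 [T1v T2v] D1v
        | i j v /intr_neq0 i_neq0 [T1v T2v] D2v].
- have [w [T1w T2w D1w]] := exactness _ _ _ _ i%:~R j%:~R v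
    (sder_D1 k) (sder_Eta1Theta2 k) (sder_Theta1 k) (sder_Theta2 k)
    (sbr_D1_Eta1Theta2 k) (sbr_Theta1_Eta1Theta2 k) (sbr_Theta2_Eta1Theta2 k)
    j_neq0 T1v T2v D1v.
  by exists w; rewrite /Vbi intrB T1w.
- have [w [T2w T1w D2w]] := exactness _ _ _ _ j%:~R i%:~R v
    (sder_D2 k) (sder_Eta2Theta1 k) (sder_Theta2 k) (sder_Theta1 k)
    (sbr_D2_Eta2Theta1 k) (sbr_Theta2_Eta2Theta1 k) (sbr_Theta1_Eta2Theta1 k)
    i_neq0 T2v T1v D2v.
  by exists w; rewrite /Vbi intrB T2w.
Qed.
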